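(* Let $(a_n)_{n\ge1}$ be an Euler–Gauss sequence such that $\gcd(a_n,n)=1$ for all $n\ge1$. Then $(a_n)$ is a Gauss sequence.
   Context: $\mu$ is the Möbius function. For an integer sequence $(a_n)$ and $n\ge1$, $A_n^+=\prod_{d\mid n,\ \mu(d)=1} a_{n/d}$ and $A_n^-=\prod_{d\mid n,\ \mu(d)=-1} a_{n/d}$ (empty products equal $1$). An Euler–Gauss sequence is an integer sequence with $A_n^+\equiv A_n^-\pmod n$ for all $n\ge1$. A Gauss sequence is an integer sequence with $\sum_{d\mid n}\mu(d)a_{n/d}\equiv0\pmod n$ for all $n\ge1$. *)

From mathcomp Require Import all_boot all_order all_algebra.
Set Implicit Arguments. Unset Strict Implicit. Unset Printing Implicit Defensive.
Import Order.TTheory GRing.Theory Num.Theory.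
Local Open Scope ring_scope.

(* Integer sequences (a_n)_{n>=1} are modelled as a : nat -> int; a 0 is ignored. *)

Definition squarefree (d : nat) : bool := all (fun p => logn p d <= 1)%N (primes d).

(* Moebius function on positive integers (value at 0 irrelevant; set to 0). *)
Definition mobius (d : nat) : int :=
  if (0 < d)%N && squarefree d then (-1) ^+ size (primes d) else 0.

Definition Aplus (a : nat -> int) (n : nat) : int :=
  \prod_(d <- divisors n | mobius d == 1) a (n %/ d)%N.

Definition Aminus (a : nat -> int) (n : nat) : int :=
  \prod_(d <- divisors n | mobius d == -1) a (n %/ d)%N.

Definition euler_gauss (a : nat -> int) : Prop :=
  forall n : nat, (0 < n)%N -> (Aplus a n == Aminus a n %[mod n%:Z])%Z.

Definition gauss (a : nat -> int) : Prop :=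
  forall n : nat, (0 < n)%N ->
    (n%:Z %| \sum_(d <- divisors n) mobius d * a (n %/ d)%N)%Z.

From mathcomp Require Import all_boot all_order all_algebra.
Import Order.TTheory GRing.Theory Num.Theory.
Local Open Scope ring_scope.

(* Write n = p^k m with p prime, k > 0 and p not dividing m.  The divisors
   of n with nonzero Moebius value are the e and p e with e | m, and
   mu(p e) = - mu(e).  Hence the Moebius sum of n is the sum of the
   mu(e) (a_(p^k m/e) - a_(p^(k-1) m/e)), and the Euler-Gauss congruence for n,
   read modulo p^k, pairs a_(p^k m/e) with a_(p^(k-1) m/e) on opposite sides.
   By strong induction on m the pairs with e > 1 are congruent modulo p^k and,
   by the coprimality hypothesis, invertible modulo p^k, so they cancel and
   leave a_(p^k m) = a_(p^(k-1) m) mod p^k.  These congruences for all p make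
   every Moebius sum divisible by every prime-power part of n. *)

Lemma ndvdn_gt0 [p m : nat] : ~~ (p %| m)%N -> (0 < m)%N.
Proof. by case: m; rewrite ?dvdn0. Qed.

Lemma Zp_intr_eq0 (q : nat) (z : int) : (1 < q)%N ->
  ((z%:~R : 'Z_q) == 0) = (q%:Z %| z)%Z.
Proof.
move=> q_gt1; case: z => n; first by rewrite -pmulrn -val_eqE /= val_Zp_nat.
by rewrite NegzE intrN oppr_eq0 dvdzE abszN -pmulrn -val_eqE /= val_Zp_nat.
Qed.

Lemma Zp_intr_eq (q : nat) (x y : int) : (1 < q)%N ->
  ((x%:~R : 'Z_q) == y%:~R) = (x == y %[mod q%:Z])%Z.
Proof. by move=> q_gt1; rewrite eqz_mod_dvd -Zp_intr_eq0 // rmorphB subr_eq0. Qed.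

Lemma Zp_intr_unit (q : nat) (z : int) : (1 < q)%N -> coprimez z q%:Z ->
  (z%:~R : 'Z_q) \is a GRing.unit.
Proof.
rewrite coprimezE => q_gt1; case: z => n /=.
  by rewrite -pmulrn unitZpE // coprime_sym.
by rewrite NegzE intrN unitrN -pmulrn unitZpE // coprime_sym.
Qed.

Lemma prod_cancel_units [R : comUnitRingType] [I : eqType] [r : seq I]
    [P N : pred I] [g h : I -> R] [x : I] :
  uniq r -> x \in r -> P x -> ~~ N x ->
  {in r, forall e, e != x -> g e = h e /\ g e \is a GRing.unit} ->
  (\prod_(e <- r | P e) g e) * (\prod_(e <- r | N e) h e) =
    (\prod_(e <- r | N e) g e) * (\prod_(e <- r | P e) h e) ->
  g x = h x.
Proof.
move=> r_uniq xr Px Nx gh.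
rewrite !(big_rem x xr) Px (negbTE Nx) /=.
have {}gh : {in rem x r, forall e, g e = h e /\ g e \is a GRing.unit}.
  by move=> e; rewrite mem_rem_uniq // => /andP[ex er]; apply: gh.
have eq_rem (Q : pred I) : \prod_(e <- rem x r | Q e) h e = \prod_(e <- rem x r | Q e) g e.
  by rewrite big_seq_cond [RHS]big_seq_cond; apply: eq_bigr => e /andP[/gh[]].
have unit_rem (Q : pred I) : \prod_(e <- rem x r | Q e) g e \is a GRing.unit.
  by rewrite big_seq_cond; apply: rpred_prod => e /andP[/gh[]].
set GP := \prod_(e <- rem x r | P e) g e; set GN := \prod_(e <- rem x r | N e) g e.
rewrite !eq_rem -/GP -/GN !mul1r -mulrA [RHS]mulrCA [GN * GP]mulrC.
by apply: mulIr; rewrite unitrM !unit_rem.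
Qed.

Lemma mobius_eq0_sq [p d : nat] : prime p -> (p * p %| d)%N -> mobius d = 0.
Proof.
move=> p_pr ppd; rewrite /mobius; case: posnP => //= d_gt0.
have pd : (p %| d)%N by apply: dvdn_trans ppd; apply: dvdn_mulr.
have logp_gt1 : (1 < logn p d)%N by rewrite -pfactor_dvdn // expnS expn1.
case sq: (squarefree d) => //; move/allP: sq => /(_ p).
by rewrite mem_primes p_pr d_gt0 pd leqNgt logp_gt1 => /(_ isT).
Qed.

Lemma mobius_primeM [p e : nat] : prime p -> ~~ (p %| e)%N ->
  mobius (p * e) = - mobius e.
Proof.
move=> p_pr pNe; have p_gt0 := prime_gt0 p_pr.
have e_gt0 := ndvdn_gt0 pNe.
have primes_pe : perm_eq (primes (p * e)) (p :: primes e).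
  apply: uniq_perm; rewrite ?primes_uniq //=.
    by rewrite primes_uniq mem_primes (negbTE pNe) !andbF.
  by move=> q; rewrite primesM // primes_prime // mem_seq1 in_cons.
have sq_pe : squarefree (p * e) = squarefree e.
  rewrite /squarefree (perm_all _ primes_pe) /= lognM // logn_prime // eqxx.
  rewrite logn_coprime ?prime_coprime //=.
  apply: eq_in_all => q; rewrite mem_primes => /and3P[q_pr _ qe].
  rewrite lognM // logn_prime //.
  by have /negbTE-> : q != p by apply: contraNneq pNe => <-.
rewrite /mobius muln_gt0 p_gt0 e_gt0 sq_pe (perm_size primes_pe) /=.
by case: (squarefree e); rewrite ?exprS ?mulN1r ?oppr0.
Qed.

Lemma perm_divisors_pfactor [p k m : nat] : prime p -> (0 < k)%N -> ~~ (p %| m)%N ->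
  perm_eq [seq d <- divisors (p ^ k * m) | ~~ (p * p %| d)%N]
          (divisors m ++ map (muln p) (divisors m)).
Proof.
move=> p_pr k_gt0 pNm; have p_gt0 := prime_gt0 p_pr.
have m_gt0 := ndvdn_gt0 pNm.
have n_gt0 : (0 < p ^ k * m)%N by rewrite muln_gt0 expn_gt0 p_gt0.
have pk : (p ^ k = p * p ^ k.-1)%N by rewrite -expnS prednK.
have dvd_pfactor j e : ~~ (p %| e)%N -> (e %| p ^ j * m)%N = (e %| m)%N.
  by move=> pNe; rewrite Gauss_dvdr // coprime_sym coprimeXl // prime_coprime.
have pN_dvd_m e : (e %| m)%N -> ~~ (p %| e)%N.
  by move=> em; apply: contra pNm => /dvdn_trans; apply.
apply: uniq_perm; first by rewrite filter_uniq ?divisors_uniq.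
  rewrite cat_uniq divisors_uniq map_inj_uniq ?divisors_uniq /=; last first.
    by move=> x y /eqP; rewrite eqn_pmul2l // => /eqP.
  rewrite andbT; apply/hasPn => _ /mapP[e _ ->]; rewrite -dvdn_divisors //.
  by apply: contra pNm; apply: dvdn_trans; apply: dvdn_mulr.
move=> d; rewrite mem_filter mem_cat -dvdn_divisors //; apply/andP/orP.
- case=> ppNd dn; case pd: (p %| d)%N.
    2: by left; rewrite -dvdn_divisors // -(dvd_pfactor k) ?pd.
  right; apply/mapP; exists (d %/ p)%N; last by rewrite mulnC divnK.
  have pNdp : ~~ (p %| d %/ p)%N.
    by apply: contra ppNd => pdp; rewrite -(divnK pd) mulnC dvdn_pmul2l.
  rewrite -dvdn_divisors // -(dvd_pfactor k.-1) //.
  by rewrite -(dvdn_pmul2l p_gt0) mulnA -pk mulnC divnK.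
- case=> [|/mapP[e]]; rewrite -dvdn_divisors // => em.
    split; last by rewrite dvdn_mull.
    by apply: contra (pN_dvd_m _ em); apply: dvdn_trans; apply: dvdn_mulr.
  move=> ->; rewrite dvdn_pmul2l // pk -mulnA dvdn_pmul2l // dvdn_mull //.
  by split=> //; exact: pN_dvd_m.
Qed.

Lemma big_divisors_pfactor_mobius [R : Type] [idx : R] (op : Monoid.com_law idx)
    [p k m : nat] (F : int -> nat -> R) :
  prime p -> (0 < k)%N -> ~~ (p %| m)%N -> (forall j, F 0 j = idx) ->
  \big[op/idx]_(d <- divisors (p ^ k * m)) F (mobius d) (p ^ k * m %/ d)%N =
  \big[op/idx]_(e <- divisors m)
     op (F (mobius e) (p ^ k * (m %/ e))%N) (F (- mobius e) (p ^ k.-1 * (m %/ e))%N).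
Proof.
move=> p_pr k_gt0 pNm F0; have p_gt0 := prime_gt0 p_pr; have m_gt0 := ndvdn_gt0 pNm.
rewrite (bigID (fun d => p * p %| d)%N) /= big1 => [|d /(mobius_eq0_sq p_pr)->//].
rewrite Monoid.mul1m -big_filter (perm_big _ (perm_divisors_pfactor p_pr k_gt0 pNm)).
rewrite big_cat big_map [RHS]big_split /=.
congr (op _ _); apply: eq_big_seq => e; rewrite -dvdn_divisors // => em.
  by rewrite muln_divA.
have pNe : ~~ (p %| e)%N by apply: contra pNm => /dvdn_trans; apply.
by rewrite mobius_primeM // -{1}(prednK k_gt0) expnS -mulnA divnMl // muln_divA.
Qed.

Lemma big_divisors_pfactor_mobius_eq [R : Type] [idx : R] (op : Monoid.com_law idx)
    [p k m : nat] (f : nat -> R) (s : int) :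
  prime p -> (0 < k)%N -> ~~ (p %| m)%N -> s != 0 ->
  \big[op/idx]_(d <- divisors (p ^ k * m) | mobius d == s) f (p ^ k * m %/ d)%N =
  op (\big[op/idx]_(e <- divisors m | mobius e == s) f (p ^ k * (m %/ e))%N)
     (\big[op/idx]_(e <- divisors m | mobius e == - s) f (p ^ k.-1 * (m %/ e))%N).
Proof.
move=> p_pr k_gt0 pNm s_neq0; rewrite big_mkcond.
rewrite (big_divisors_pfactor_mobius _ (fun t j => if t == s then f j else idx)) //=.
  by rewrite big_split -!big_mkcond; congr (op _ _); apply: eq_bigl => e; rewrite eqr_oppLR.
by move=> j; rewrite eq_sym (negbTE s_neq0).
Qed.

Lemma gauss_of_pfactor_congr (a : nat -> int) :
  (forall p k m, prime p -> (0 < k)%N -> ~~ (p %| m)%N ->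
     (a (p ^ k * m)%N == a (p ^ k.-1 * m)%N %[mod (p ^ k)%N%:Z])%Z) ->
  gauss a.
Proof.
move=> congr n n_gt0; rewrite dvdzE absz_nat; apply/dvdn_partP => // p pn.
have p_pr : prime p by move: pn; rewrite mem_primes => /andP[].
have k_gt0 : (0 < logn p n)%N by rewrite logn_gt0.
rewrite p_part; have [m pm n_eq] := pfactor_coprime p_pr n_gt0.
move: n_eq k_gt0; set k := logn p n; clearbody k; rewrite mulnC => -> k_gt0.
rewrite prime_coprime // in pm; have m_gt0 := ndvdn_gt0 pm.
rewrite -[(p ^ k)%N]absz_nat -dvdzE.
rewrite (big_divisors_pfactor_mobius _ (fun s j => s * a j)) // => [|j]; last exact: mul0r.
rewrite big_seq; apply: rpred_sum => e; rewrite -dvdn_divisors // => em.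
rewrite /= mulNr -mulrBr dvdz_mull // -eqz_mod_dvd congr //.
by apply: contra pm => /dvdn_trans; apply; apply: dvdn_div.
Qed.

Lemma euler_gauss_Zp [a : nat -> int] [q n : nat] :
  euler_gauss a -> (1 < q)%N -> (0 < n)%N -> (q %| n)%N ->
  \prod_(d <- divisors n | mobius d == 1) ((a (n %/ d)%N)%:~R : 'Z_q) =
  \prod_(d <- divisors n | mobius d == -1) (a (n %/ d)%N)%:~R.
Proof.
move=> eg q_gt1 n_gt0 qn; apply/eqP; rewrite -!rmorph_prod Zp_intr_eq // eqz_mod_dvd.
apply: dvdz_trans (_ : n%:Z %| _)%Z; first by rewrite dvdzE.
by rewrite -eqz_mod_dvd eg.
Qed.

Lemma euler_gauss_pfactor_congr (a : nat -> int) (p k m : nat) :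
  euler_gauss a -> (forall n : nat, (0 < n)%N -> gcdz (a n) n%:Z = 1) ->
  prime p -> (0 < k)%N -> ~~ (p %| m)%N ->
  (a (p ^ k * m)%N == a (p ^ k.-1 * m)%N %[mod (p ^ k)%N%:Z])%Z.
Proof.
move=> eg coprime_a p_pr k_gt0; elim/ltn_ind: m => m IH pNm.
have m_gt0 := ndvdn_gt0 pNm.
have n_gt0 : (0 < p ^ k * m)%N by rewrite muln_gt0 expn_gt0 prime_gt0.
have q_gt1 : (1 < p ^ k)%N by rewrite -(exp1n k) ltn_exp2r ?prime_gt1 // -lt0n.
pose F j := (a j)%:~R : 'Z_(p ^ k).
have := euler_gauss_Zp eg q_gt1 n_gt0 (dvdn_mulr m (dvdnn _)).
rewrite !(big_divisors_pfactor_mobius_eq _ F) ?oppr_eq0 // opprK => EG.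
suff : F (p ^ k * (m %/ 1))%N = F (p ^ k.-1 * (m %/ 1))%N.
  by rewrite !divn1 => /eqP; rewrite Zp_intr_eq.
apply: (prod_cancel_units _ _ _ _ _ EG); rewrite ?divisors_uniq -?dvdn_divisors ?dvd1n //.
move=> e; rewrite -dvdn_divisors // => em e_neq1.
have e_gt1 : (1 < e)%N by rewrite ltn_neqAle eq_sym e_neq1 (dvdn_gt0 m_gt0 em).
have pNme : ~~ (p %| m %/ e)%N by apply: contra pNm => /dvdn_trans; apply; apply: dvdn_div.
split; first by apply/eqP; rewrite Zp_intr_eq // IH // ltn_Pdiv.
apply: Zp_intr_unit => //; apply: coprimez_dvdr (dvdn_mulr (m %/ e) (dvdnn _)) _.
by rewrite /coprimez coprime_a // muln_gt0 expn_gt0 prime_gt0 // (ndvdn_gt0 pNme).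
Qed.

Theorem theorem3 (a : nat -> int) :
  euler_gauss a ->
  (forall n : nat, (0 < n)%N -> gcdz (a n) n%:Z = 1) ->
  gauss a.
Proof.
move=> eg coprime_a; apply: gauss_of_pfactor_congr => p k m.
exact: euler_gauss_pfactor_congr.
Qed.
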